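(* Let $R=k[x_1,\dots,x_n]$, $f_1,\dots,f_m\in R$, $I=\langle f_1,\dots,f_m\rangle$, with fixed term orders on $R$ and $R^m$. Let $G$ be a finite set of polynomials in $I$ with $\{f_1^{[\mathbf e_1]},\dots,f_m^{[\mathbf e_m]}\}\subset G$. If for every critical pair of elements of $G$ its S-polynomial has a standard representation w.r.t. $G$, then $G$ is a labeled Gröbner basis for $I$.
   Context: Let $\mathbf f=(f_1,\dots,f_m)$; a polynomial in $I$ is a pair $f^{[\mathbf u]}$ with $\mathbf u\in R^m$ and $f=\mathbf u\cdot\mathbf f$, with operations $f^{[\mathbf u]}+g^{[\mathbf v]}=(f+g)^{[\mathbf u+\mathbf v]}$, $ct(f^{[\mathbf u]})=(ctf)^{[ct\mathbf u]}$. $\mathbf e_i$ is the $i$-th unit vector. $\mathrm{lpp},\mathrm{lc}$ are leading power product and coefficient (both orders denoted $\prec$), with $\mathrm{lpp}(0)=0\prec$ all nonzero power products. A module monomial $x^\alpha\mathbf e_i$ divides $x^\beta\mathbf e_j$ iff $i=j$ and $x^\alpha\mid x^\beta$. Critical pair: for $g^{[\mathbf v]},h^{[\mathbf w]}$ with $g,h\ne0$, $t=\mathrm{lcm}(\mathrm{lpp}(g),\mathrm{lpp}(h))$, $t_g=t/\mathrm{lpp}(g)$, $t_h=t/\mathrm{lpp}(h)$; if $\mathrm{lpp}(t_g\mathbf v)\succeq\mathrm{lpp}(t_h\mathbf w)$ then $(t_g,g^{[\mathbf v]},t_h,h^{[\mathbf w]})$ is a critical pair, with S-polynomial $t_g(g^{[\mathbf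 v]})-c\,t_h(h^{[\mathbf w]})$, $c=\mathrm{lc}(g)/\mathrm{lc}(h)$. A polynomial $f^{[\mathbf u]}$ in $I$ has a standard representation w.r.t. $B$ if there are $p_i\in R$ and $g_i^{[\mathbf v_i]}\in B$ with $f=\sum_i p_ig_i$, $\mathrm{lpp}(f)\succeq\mathrm{lpp}(p_ig_i)$ and $\mathrm{lpp}(\mathbf u)\succeq\mathrm{lpp}(p_i\mathbf v_i)$ for all $i$. $G$ is a labeled Gröbner basis for $I$ if for every $f^{[\mathbf u]}$ in $I$ with $f\ne0$ there is $g^{[\mathbf v]}\in G$ with $\mathrm{lpp}(g)\mid\mathrm{lpp}(f)$ and $\mathrm{lpp}(t\mathbf v)\preceq\mathrm{lpp}(\mathbf u)$, $t=\mathrm{lpp}(f)/\mathrm{lpp}(g)$. *)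

From HB Require Import structures.
From mathcomp Require Import all_boot all_order all_algebra.
From mathcomp Require Export mpoly.
Set Implicit Arguments. Unset Strict Implicit. Unset Printing Implicit Defensive.
Import Order.TTheory GRing.Theory.
Local Open Scope ring_scope.

Definition is_total_order (T : eqType) (le : rel T) : Prop :=
  [/\ reflexive le, antisymmetric le, transitive le & total le].

Definition is_term_order (n : nat) (le : rel 'X_{1..n}) : Prop :=
  [/\ is_total_order le,
      (forall a b c : 'X_{1..n}, le a b -> le (a + c)%MM (b + c)%MM)
    & (forall a : 'X_{1..n}, le 0%MM a)].

(* term order on module monomials x^a e_i of R^m *)
Definition is_module_term_order (n m : nat) (le : rel ('X_{1..n} * 'I_m)) : Prop :=
  [/\ is_total_order le,
      (forall (a b c : 'X_{1..n}) (i j : 'I_m),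
          le (a, i) (b, j) -> le ((a + c)%MM, i) ((b + c)%MM, j))
    & (forall (a c : 'X_{1..n}) (i : 'I_m), le (a, i) ((a + c)%MM, i))].

Definition omax (T : Type) (le : rel T) (s : seq T) : option T :=
  foldr (fun x acc => if acc is Some y then (if le y x then Some x else Some y)
                      else Some x) None s.

Definition ole (T : Type) (le : rel T) (a b : option T) : bool :=
  match a, b with
  | None, _ => true
  | Some _, None => false
  | Some x, Some y => le x y
  end.

Section Labeled.
Variables (k : fieldType) (n m : nat).

Local Notation poly := {mpoly k[n]}.
Definition vec := {ffun 'I_m -> poly}.
Definition lpoly := (poly * vec)%type.

(* leading power product (None stands for lpp(0) = 0) and leading coefficient *)
Definition lpp (le : rel 'X_{1..n}) (f : poly) : option 'X_{1..n} :=
  omax le (msupp f).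
Definition lc (le : rel 'X_{1..n}) (f : poly) : k :=
  if lpp le f is Some t then f@_t else 0.

Definition vsupp (u : vec) : seq ('X_{1..n} * 'I_m) :=
  [seq (a, i) | i <- enum 'I_m, a <- msupp (u i)].
Definition vlpp (mle : rel ('X_{1..n} * 'I_m)) (u : vec) :=
  omax mle (vsupp u).

Definition dotv (u : vec) (F : 'I_m -> poly) : poly := \sum_(i < m) u i * F i.
Definition pscale (p : poly) (u : vec) : vec := [ffun i => p * u i].
Definition unitv (i : 'I_m) : vec := [ffun j => (i == j)%:R].

Definition in_ideal (F : 'I_m -> poly) (x : lpoly) : Prop := x.1 = dotv x.2 F.

Definition lmul (p : poly) (x : lpoly) : lpoly := (p * x.1, pscale p x.2).
Definition lscale (c : k) (x : lpoly) : lpoly := (c *: x.1, [ffun i => c *: x.2 i]).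
Definition lsub (x y : lpoly) : lpoly := (x.1 - y.1, [ffun i => x.2 i - y.2 i]).

Definition spoly (le : rel 'X_{1..n}) (tg th : 'X_{1..n}) (x y : lpoly) : lpoly :=
  lsub (lmul 'X_[tg] x) (lscale (lc le x.1 / lc le y.1) (lmul 'X_[th] y)).

Definition critical_pair (le : rel 'X_{1..n}) (mle : rel ('X_{1..n} * 'I_m))
    (tg : 'X_{1..n}) (x : lpoly) (th : 'X_{1..n}) (y : lpoly) : Prop :=
  exists ag ah, [/\ lpp le x.1 = Some ag, lpp le y.1 = Some ah,
    tg = (mlcm ag ah - ag)%MM, th = (mlcm ag ah - ah)%MM &
    ole mle (vlpp mle (pscale 'X_[th] y.2)) (vlpp mle (pscale 'X_[tg] x.2))].

Definition std_rep (le : rel 'X_{1..n}) (mle : rel ('X_{1..n} * 'I_m))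
    (B : seq lpoly) (x : lpoly) : Prop :=
  exists r : seq (poly * lpoly),
    [/\ (forall pr, pr \in r -> pr.2 \in B),
        x.1 = \sum_(pr <- r) pr.1 * pr.2.1
      & (forall pr, pr \in r ->
           ole le (lpp le (pr.1 * pr.2.1)) (lpp le x.1) /\
           ole mle (vlpp mle (pscale pr.1 pr.2.2)) (vlpp mle x.2))].

Definition labeled_GB (le : rel 'X_{1..n}) (mle : rel ('X_{1..n} * 'I_m))
    (F : 'I_m -> poly) (G : seq lpoly) : Prop :=
  forall x : lpoly, in_ideal F x -> x.1 != 0 ->
    exists2 y, y \in G &
      exists tf tg, [/\ lpp le x.1 = Some tf, lpp le y.1 = Some tg,
        (tg <= tf)%MM &
        ole mle (vlpp mle (pscale 'X_[(tf - tg)%MM] y.2)) (vlpp mle x.2)].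

End Labeled.

From HB Require Import structures.
From mathcomp Require Import all_boot all_order all_algebra.
From mathcomp Require Import mpoly.
From mathcomp Require Import zify ring.
From Stdlib Require Import Classical.
Set Implicit Arguments. Unset Strict Implicit. Unset Printing Implicit Defensive.
Import GRing.Theory.

(* Expanding f^[u] along its label writes f as a sum of terms (u_i)_a x^a f_i: monomial
   multiples of elements of G whose shifted labels are at most lpp(u).  Let t be the largest
   leading power product of the terms of such a representation.  Two terms reaching t are
   multiples of one S-polynomial of G; replacing them by its standard representation keeps
   every label below lpp(u), leaves a single multiple of a generator reaching t and pushes
   everything else strictly below t.  Since the term order is well founded (Dickson's lemma),
   this ends with exactly one term c x^s g reaching t, so lpp(f) = t = s + lpp(g) and g is the
   element of G required. *)

Section TotalOrder.
Variables (T : eqType) (R : rel T).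
Hypothesis HR : is_total_order R.

Lemma tord_refl x : R x x. Proof. by case: HR => r _ _ _; apply: r. Qed.

Lemma tord_trans x y z : R x y -> R y z -> R x z.
Proof. by case: HR => _ _ t _; apply: t. Qed.

Lemma tord_anti x y : R x y -> R y x -> x = y.
Proof. by case: HR => _ a _ _ h1 h2; apply: a; rewrite h1 h2. Qed.

Lemma tord_total x y : R x y || R y x. Proof. by case: HR => _ _ _; apply. Qed.

Lemma omax_spec s : (s = [::] /\ omax R s = None) \/
  exists x, [/\ omax R s = Some x, x \in s & forall y, y \in s -> R y x].
Proof.
elim: s => [|x s IH]; first by left.
right; rewrite /=; case: IH => [[-> ->]|[y [-> ys yM]]].
  by exists x; split; rewrite ?mem_seq1 // => z; rewrite mem_seq1 => /eqP ->; apply: tord_refl.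
case: ifP => Hyx.
  exists x; split; rewrite ?inE ?eqxx // => z; rewrite inE => /orP[/eqP ->|zs].
    exact: tord_refl.
  exact: tord_trans (yM _ zs) Hyx.
exists y; split; rewrite ?inE ?ys ?orbT // => z; rewrite inE => /orP[/eqP ->|zs]; last exact: yM.
by case/orP: (tord_total y x) => h; rewrite ?h in Hyx.
Qed.

Lemma omax_uniq s x : x \in s -> (forall y, y \in s -> R y x) -> omax R s = Some x.
Proof.
move=> xs xM; case: (omax_spec s) => [[E _]|[z [-> zs zM]]]; first by rewrite E in xs.
by rewrite (tord_anti (xM _ zs) (zM _ xs)).
Qed.

Lemma omax_eq_mem s1 s2 : s1 =i s2 -> omax R s1 = omax R s2.
Proof.
move=> E; case: (omax_spec s1) => [[E1 ->]|[x [-> xs xM]]].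
  case: (omax_spec s2) => [[_ ->]//|[x [_ xs _]]].
  by rewrite -E E1 in xs.
by symmetry; apply: omax_uniq; rewrite -?E // => y; rewrite -E; apply: xM.
Qed.

Lemma omax_ub s x : x \in s -> ole R (Some x) (omax R s).
Proof.
move=> xs; case: (omax_spec s) => [[E _]|[z [-> _ zM]]]; first by rewrite E in xs.
exact: zM.
Qed.

Lemma omax_lub s o : (forall x, x \in s -> ole R (Some x) o) -> ole R (omax R s) o.
Proof. by move=> H; case: (omax_spec s) => [[_ ->]//|[z [-> zs _]]]; apply: H. Qed.

Lemma omax_in s x : omax R s = Some x -> x \in s.
Proof. by case: (omax_spec s) => [[_ ->]//|[z [-> zs _]] [<-]]. Qed.

Lemma omax_eq_None s : omax R s = None -> s = [::].
Proof. by case: (omax_spec s) => [[->]//|[z [-> _ _]]]. Qed.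

Lemma ole_refl a : ole R a a.
Proof. by case: a => //= x; apply: tord_refl. Qed.

Lemma ole_trans a b c : ole R a b -> ole R b c -> ole R a c.
Proof. by case: a; case: b; case: c => //= x y z; apply: tord_trans. Qed.

Lemma ole_anti a b : ole R a b -> ole R b a -> a = b.
Proof. by case: a; case: b => //= x y h1 h2; rewrite (tord_anti h1 h2). Qed.

Lemma ole_total a b : ole R a b || ole R b a.
Proof. by case: a; case: b => //= x y; apply: tord_total. Qed.

Definition olt (a b : option T) := ole R a b && (a != b).

Lemma olt_ole a b : olt a b -> ole R a b. Proof. by case/andP. Qed.

Lemma ole_olt_trans a b c : ole R a b -> olt b c -> olt a c.
Proof.
move=> ab /andP[bc nbc]; rewrite /olt (ole_trans ab bc); apply: contra nbc => /eqP ac.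
by rewrite (ole_anti bc); rewrite -?ac.
Qed.

Lemma option_max_spec (I : eqType) (f : I -> option T) (r : seq I) :
  {in r, forall i, f i = None} \/
  exists t, (exists2 i, i \in r & f i = Some t) /\ {in r, forall i, ole R (f i) (Some t)}.
Proof.
case: (omax_spec (pmap f r)) => [[E _]|[t [_ tin tM]]].
  left => i ir; case Ei : (f i) => [z|] //.
  have : z \in pmap f r by rewrite mem_pmap; apply/mapP; exists i.
  by rewrite E.
right; exists t; split.
  by move: tin; rewrite mem_pmap => /mapP [i ir E]; exists i.
move=> i ir; case Ei : (f i) => [z|] //=; apply: tM.
by rewrite mem_pmap; apply/mapP; exists i.
Qed.

End TotalOrder.

Lemma count_gt1_perm (T : eqType) (P : pred T) (r : seq T) : 1 < count P r ->
  exists e1 e2 rest, [/\ P e1, P e2 & perm_eq r [:: e1, e2 & rest]].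
Proof.
move=> c2; have /hasP [e1 e1r P1] : has P r by rewrite has_count ltnW.
have /hasP [e2 e2r P2] : has P (rem e1 r).
  by move: c2; rewrite has_count (permP (perm_to_rem e1r)) /= P1.
exists e1, e2, (rem e2 (rem e1 r)); split => //.
by apply: perm_trans (perm_to_rem e1r) _; rewrite perm_cons perm_to_rem.
Qed.

Lemma omax_map (T U : Type) (R : rel T) (R' : rel U) (f : T -> U) s :
  (forall x y, R' (f x) (f y) = R x y) -> omax R' (map f s) = omap f (omax R s).
Proof.
move=> Hf; elim: s => [|x s IH] //=; rewrite IH.
by case: (omax R s) => //= y; rewrite Hf; case: ifP.
Qed.

Lemma dickson (T : eqType) (c : T -> nat -> nat) (d : nat) (P : T -> Prop) :
  exists B : seq T, (forall b, b \in B -> P b) /\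
    forall x, P x -> exists2 b, b \in B & forall i, i < d -> c b i <= c x i.
Proof.
elim: d P => [|d IH] P.
  case: (classic (exists x, P x)) => [[x Px]|NP].
    exists [:: x]; split; first by move=> b; rewrite mem_seq1 => /eqP ->.
    by move=> y _; exists x; rewrite ?mem_seq1.
  by exists [::]; split=> // x Px; case: NP; exists x.
have [B0 [B0P B0c]] := IH P.
(* elements whose last coordinate is below N are covered by finitely many slices *)
have slices N : exists B : seq T, (forall b, b \in B -> P b) /\
    forall x, P x -> c x d < N -> exists2 b, b \in B & forall i, i < d.+1 -> c b i <= c x i.
  elim: N => [|N [B1 [B1P B1c]]]; first by exists [::]; split.
  have [B2 [B2P B2c]] := IH (fun x => P x /\ c x d = N).
  exists (B1 ++ B2); split.
    by move=> b; rewrite mem_cat => /orP[/B1P|/B2P[]].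
  move=> x Px; rewrite ltnS leq_eqVlt => /orP[/eqP E|lt].
    have [b bB bc] := B2c x (conj Px E).
    exists b; first by rewrite mem_cat bB orbT.
    move=> i; rewrite ltnS leq_eqVlt => /orP[/eqP ->|/bc //].
    by have [_ ->] := B2P b bB; rewrite E.
  by have [b bB bc] := B1c x Px lt; exists b => //; rewrite mem_cat bB.
have [B1 [B1P B1c]] := slices (\max_(b <- B0) c b d).
exists (B0 ++ B1); split; first by move=> b; rewrite mem_cat => /orP[/B0P|/B1P].
move=> x Px; case: (ltnP (c x d) (\max_(b <- B0) c b d)) => h.
  by have [b bB bc] := B1c x Px h; exists b => //; rewrite mem_cat bB orbT.
have [b bB bc] := B0c x Px; exists b; first by rewrite mem_cat bB.
move=> i; rewrite ltnS leq_eqVlt => /orP[/eqP ->|/bc //].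
by apply: leq_trans h; apply: leq_bigmax_seq.
Qed.

Section TermOrder.
Variables (n : nat) (le : rel 'X_{1..n}).
Hypothesis Hle : is_term_order le.

Lemma term_order_total : is_total_order le. Proof. by case: Hle. Qed.

Lemma term_order_lem a b : (a <= b)%MM -> le a b.
Proof.
move=> ab; case: Hle => _ Hc H0.
by have := Hc _ _ a (H0 (b - a)%MM); rewrite add0m submK.
Qed.

Lemma term_order_wf : well_founded (fun a b => olt le (Some a) (Some b)).
Proof.
set lt := fun a b => _.
have LT := term_order_total.
have TR : is_total_order (fun a b : 'X_{1..n} => le b a).
  split.
  - by move=> a; apply: (tord_refl LT).
  - by move=> a b /andP[h1 h2]; apply: (tord_anti LT).
  - by move=> a b c h1 h2; apply: (tord_trans LT) h2 h1.
  - by move=> a b; rewrite orbC; apply: (tord_total LT).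
move=> x; apply: NNPP => nAx.
have [B [BP Bc]] := dickson (fun (a : 'X_{1..n}) i => nth 0%N a i) n (fun a => ~ Acc lt a).
(* The le-least element b0 of a Dickson basis of the inaccessible monomials is accessible:
   every inaccessible y is a multiple of a basis element, hence not below b0. *)
case: (omax_spec TR B) => [[E _]|[b0 [_ b0B b0M]]].
  by have [b] := Bc x nAx; rewrite E.
apply: (BP b0 b0B); constructor => y /andP[yb0 ny].
apply: NNPP => nAy; have [b bB bc] := Bc y nAy.
have le_by : le b y.
  by apply: term_order_lem; apply/mnm_lepP => i; rewrite !(mnm_nth 0%N); apply: bc.
have E := tord_anti LT yb0 (tord_trans LT (b0M _ bB) le_by).
by rewrite E eqxx in ny.
Qed.

End TermOrder.

Section ShiftOrder.
Variables (k : fieldType) (n : nat).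
Local Notation poly := {mpoly k[n]}.
Local Open Scope ring_scope.

Definition shift_order (R : rel 'X_{1..n}) :=
  is_total_order R /\ forall c a b, R (c + a)%MM (c + b)%MM = R a b.

Lemma shift_order_of_compat R : is_total_order R ->
  (forall c a b, R a b -> R (a + c)%MM (b + c)%MM) -> shift_order R.
Proof.
move=> TR Hc; split=> // c a b; apply/idP/idP => h; last first.
  by rewrite ![(c + _)%MM]addmC; apply: Hc.
case/orP: (tord_total TR a b) => // ba.
have := Hc c _ _ ba; rewrite ![(_ + c)%MM]addmC => h2.
by have /addmI -> := tord_anti TR h h2; apply: tord_refl.
Qed.

Lemma term_order_shift le : is_term_order le -> shift_order le.
Proof.
move=> Hle; apply: shift_order_of_compat; first exact: term_order_total.
by case: Hle => _ Hc _ c a b; apply: Hc.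
Qed.

Lemma mem_msuppXM c (p : poly) a :
  (a \in msupp ('X_[c] * p)) = (a \in [seq (c + b)%MM | b <- msupp p]).
Proof. by rewrite mulrC (perm_mem (msuppMX p c)). Qed.

Variables (R : rel 'X_{1..n}) (HR : shift_order R).
Let TR := HR.1.

Lemma ole_shift c o1 o2 :
  ole R (omap (fun a => c + a)%MM o1) (omap (fun a => c + a)%MM o2) = ole R o1 o2.
Proof. by case: o1; case: o2 => //= a b; rewrite HR.2. Qed.

Lemma olt_shift c o1 o2 :
  olt R (omap (fun a => c + a)%MM o1) (omap (fun a => c + a)%MM o2) = olt R o1 o2.
Proof.
rewrite /olt ole_shift; congr (_ && ~~ _).
by case: o1; case: o2 => // a b; rewrite /= !(inj_eq (@Some_inj _)) (inj_eq (@addmI _ c)).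
Qed.

Lemma lppXM c (p : poly) : lpp R ('X_[c] * p) = omap (fun a => (c + a)%MM) (lpp R p).
Proof.
rewrite /lpp (omax_eq_mem TR (mem_msuppXM c p)).
by apply: omax_map => a b; apply: HR.2.
Qed.

Lemma lppZ (c : k) (p : poly) : c != 0 -> lpp R (c *: p) = lpp R p.
Proof. by move=> nz; rewrite /lpp; apply: (omax_eq_mem TR); apply: perm_mem; apply: msuppZ. Qed.

Lemma lppZ_le (c : k) (p : poly) : ole R (lpp R (c *: p)) (lpp R p).
Proof.
have [->|nz] := eqVneq c 0; first by rewrite scale0r /lpp msupp0.
by rewrite lppZ //; apply: (ole_refl TR).
Qed.

Lemma lpp_eq0 (p : poly) : (lpp R p == None) = (p == 0).
Proof. by apply/eqP/eqP => [/(omax_eq_None TR)/msuppnil0 //|->]; rewrite /lpp msupp0. Qed.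

Lemma lpp_in (p : poly) a : lpp R p = Some a -> a \in msupp p.
Proof. exact: omax_in. Qed.

Lemma lpp_ub (p : poly) a : a \in msupp p -> ole R (Some a) (lpp R p).
Proof. exact: omax_ub. Qed.

Lemma msupp_mul_lead (p h : poly) a b :
  a \in msupp p -> b \in msupp h -> (forall y, y \in msupp h -> R y b) ->
  exists a', [/\ a' \in msupp p, R a a' & (a' + b)%MM \in msupp (p * h)].
Proof.
move=> ap bh bM.
case: (omax_spec TR (msupp p)) => [[E _]|[a' [_ a'p a'M]]]; first by rewrite E in ap.
exists a'; split => //; first exact: a'M.
rewrite mcoeff_msupp mpolyME raddf_sum /=.
under eq_bigr do rewrite mcoeffZ mcoeffX.
have zin : (a', b) \in [seq (x, y) | x <- msupp p, y <- msupp h].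
  by apply/allpairsP; exists (a', b).
rewrite (bigD1_seq (a', b)) //=; last first.
  by apply: allpairs_uniq; rewrite ?msupp_uniq // => -[x1 y1] [x2 y2] _ _ /= [-> ->].
rewrite eqxx mulr1 big1_seq ?addr0; first by rewrite mulf_neq0 // -mcoeff_msupp.
move=> [x y] /andP[nz H]; move: nz; case/allpairsP: H => [[x' y'] [xp yh /= [-> ->]]] nz /=.
case: eqP => [E|]; last by rewrite mulr0.
(* a' + b is the largest product exponent, attained only by (a', b) *)
have h1 : R (x' + y')%MM (x' + b)%MM by rewrite HR.2; apply: bM.
have h2 : R (x' + b)%MM (a' + b)%MM by rewrite ![(_ + b)%MM]addmC HR.2; apply: a'M.
rewrite E in h1; have E2 := tord_anti TR h1 h2.
have E3 : x' = a' by apply: (addIm (esym E2)).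
subst x'; move/addmI: E => Ey; subst y'.
by rewrite eqxx in nz.
Qed.

Lemma lpp_mulX_le (p g : poly) a :
  a \in msupp p -> ole R (lpp R ('X_[a] * g)) (lpp R (p * g)).
Proof.
move=> ap; rewrite lppXM; case Eg: (lpp R g) => [b|] //.
have bM y : y \in msupp g -> R y b by move/lpp_ub; rewrite Eg.
have [a' [_ aa' a'in]] := msupp_mul_lead ap (lpp_in Eg) bM.
apply: (ole_trans TR _ (lpp_ub a'in)).
by rewrite /= ![(_ + b)%MM]addmC HR.2.
Qed.

Lemma lpp_sum_le (I : eqType) (s : seq I) (F : I -> poly) o :
  (forall i, i \in s -> ole R (lpp R (F i)) o) -> ole R (lpp R (\sum_(i <- s) F i)) o.
Proof.
move=> Hs; apply: (omax_lub TR) => a /msupp_sum_le /flatten_mapP [i].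
rewrite mem_filter => /andP[_ si] /lpp_ub ai.
by move: ai (Hs i si); apply: ole_trans.
Qed.

Lemma lpp_sum_lt (I : eqType) (s : seq I) (F : I -> poly) t :
  (forall i, i \in s -> olt R (lpp R (F i)) (Some t)) ->
  olt R (lpp R (\sum_(i <- s) F i)) (Some t).
Proof.
move=> Hs; rewrite /olt (lpp_sum_le (fun i si => olt_ole (Hs i si))) /=.
apply/eqP => /lpp_in; rewrite mcoeff_msupp raddf_sum big1_seq ?eqxx // => i /andP[_ si].
apply/memN_msupp_eq0/negP => /lpp_ub ti.
by have /andP[_] := ole_olt_trans TR ti (Hs i si); rewrite eqxx.
Qed.

Lemma lpp_add_lt (p q : poly) : olt R (lpp R q) (lpp R p) -> lpp R (p + q) = lpp R p.
Proof.
case Ep: (lpp R p) => [t|]; last by case: (lpp R q).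
move=> qt; apply: (omax_uniq TR).
  have tq : t \notin msupp q.
    by apply/negP => /lpp_ub tq; have /andP[_] := ole_olt_trans TR tq qt; rewrite eqxx.
  by rewrite mcoeff_msupp mcoeffD (memN_msupp_eq0 tq) addr0 -mcoeff_msupp (lpp_in Ep).
move=> a /msuppD_le; rewrite mem_cat => /orP[] /lpp_ub; first by rewrite Ep.
by move=> aq; have /= := ole_trans TR aq (olt_ole qt).
Qed.

Lemma lpp_spoly_lt (g h : poly) a b : lpp R g = Some a -> lpp R h = Some b ->
  olt R (lpp R ('X_[mlcm a b - a] * g - (lc R g / lc R h) *: ('X_[mlcm a b - b] * h)))
        (Some (mlcm a b)).
Proof.
move=> Ea Eb; set L := mlcm a b.
have La : (L - a + a)%MM = L by rewrite submK // lem_mlcml.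
have Lb : (L - b + b)%MM = L by rewrite submK // lem_mlcmr.
apply/andP; split.
  apply: (omax_lub TR) => z /msuppB_le; rewrite mem_cat => /orP[|/msuppZ_le].
    rewrite mem_msuppXM => /mapP [a' /lpp_ub a'g ->] /=.
    by rewrite -{2}La HR.2; move: a'g; rewrite Ea.
  rewrite mem_msuppXM => /mapP [b' /lpp_ub b'h ->] /=.
  by rewrite -{2}Lb HR.2; move: b'h; rewrite Eb.
(* the two leading terms cancel at L *)
apply/negP => /eqP /lpp_in; rewrite mcoeff_msupp mcoeffB mcoeffZ.
have -> : ('X_[L - a] * g)@_L = g@_a by rewrite -[X in _@_X]La mulrC mcoeffMX.
have -> : ('X_[L - b] * h)@_L = h@_b by rewrite -[X in _@_X]Lb mulrC mcoeffMX.
have hb : h@_b != 0 by rewrite -mcoeff_msupp; apply: lpp_in Eb.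
by rewrite /lc Ea Eb divfK // subrr eqxx.
Qed.

End ShiftOrder.

Section ModuleOrder.
Variables (k : fieldType) (n m : nat).
Local Notation poly := {mpoly k[n]}.
Local Notation vec := (vec k n m).
Local Open Scope ring_scope.
Variable mle : rel ('X_{1..n} * 'I_m).
Hypothesis Hmle : is_module_term_order mle.
Lemma module_term_order_total : is_total_order mle. Proof. by case: Hmle. Qed.
Let MT := module_term_order_total.

Lemma mem_vsupp (u : vec) a i : ((a, i) \in vsupp u) = (a \in msupp (u i)).
Proof.
apply/idP/idP; first by case/allpairsPdep => j [b [_ bu [-> ->]]].
by move=> h; apply/allpairsPdep; exists i, a; rewrite mem_enum.
Qed.

Lemma pscaleXD s t (v : vec) : pscale 'X_[(s + t)%MM] v = pscale 'X_[s] (pscale 'X_[t] v).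
Proof. by apply/ffunP => i; rewrite !ffunE mpolyXD mulrA. Qed.

Lemma component_shift_order i : shift_order (fun a b : 'X_{1..n} => mle (a, i) (b, i)).
Proof.
apply: shift_order_of_compat; last by case: Hmle => _ Hc _ c a b; apply: Hc.
split.
- by move=> a; apply: (tord_refl MT).
- by move=> a b /andP[h1 h2]; case: (tord_anti MT h1 h2).
- by move=> a b c; apply: (tord_trans MT).
- by move=> a b; apply: (tord_total MT).
Qed.

Definition shiftm (c : 'X_{1..n}) (z : 'X_{1..n} * 'I_m) := ((c + z.1)%MM, z.2).

Lemma mle_shift c z w : mle (shiftm c z) (shiftm c w) = mle z w.
Proof.
case: Hmle => _ Hc _; case: z w => [a i] [b j]; rewrite /shiftm /=.
apply/idP/idP => h; last by rewrite ![(c + _)%MM]addmC; apply: Hc.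
case/orP: (tord_total MT (a, i) (b, j)) => // h2.
have := Hc _ _ c _ _ h2; rewrite ![(_ + c)%MM]addmC => h3.
have E := tord_anti MT h h3.
have Eij : i = j := congr1 snd E.
by rewrite (addmI (congr1 fst E)) Eij; apply: (tord_refl MT (b, j)).
Qed.

Lemma ole_shiftm c o1 o2 :
  ole mle (omap (shiftm c) o1) (omap (shiftm c) o2) = ole mle o1 o2.
Proof. by case: o1; case: o2 => //= z w; rewrite mle_shift. Qed.

Lemma vlppXM c (v : vec) : vlpp mle (pscale 'X_[c] v) = omap (shiftm c) (vlpp mle v).
Proof.
rewrite /vlpp -(omax_map _ (mle_shift c)); apply: (omax_eq_mem MT) => -[a i].
rewrite mem_vsupp ffunE mem_msuppXM; apply/mapP/mapP.
  by case=> b bv ->; exists (b, i); rewrite ?mem_vsupp.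
by case=> -[b j]; rewrite mem_vsupp /shiftm /= => bv [-> ->]; exists b.
Qed.

Lemma vlpp_mulX_le (p : poly) (v : vec) a :
  a \in msupp p -> ole mle (vlpp mle (pscale 'X_[a] v)) (vlpp mle (pscale p v)).
Proof.
move=> ap; rewrite vlppXM; case E: (vlpp mle v) => [[b i]|] //.
have bv : b \in msupp (v i) by rewrite -mem_vsupp; apply: (omax_in MT E).
have bM y : y \in msupp (v i) -> mle (y, i) (b, i).
  by rewrite -mem_vsupp => /(omax_ub MT); rewrite /vlpp in E; rewrite E.
have [a' [_ aa' a'in]] := msupp_mul_lead (component_shift_order i) ap bv bM.
have le_a'b : ole mle (Some ((a' + b)%MM, i)) (vlpp mle (pscale p v)).
  by apply: (omax_ub MT); rewrite mem_vsupp ffunE.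
apply: (ole_trans MT _ le_a'b).
by rewrite /= /shiftm /= ![(_ + b)%MM]addmC (component_shift_order i).2.
Qed.

Lemma vlpp_subZ_le (A B : vec) (c : k) : ole mle (vlpp mle B) (vlpp mle A) ->
  ole mle (vlpp mle [ffun i => A i - c *: B i]) (vlpp mle A).
Proof.
move=> BA; apply: (omax_lub MT) => -[a i]; rewrite mem_vsupp ffunE.
move=> /msuppB_le; rewrite mem_cat -mem_vsupp => /orP[/(omax_ub MT) //|/msuppZ_le].
by rewrite -mem_vsupp => /(omax_ub MT) aB; apply: (ole_trans MT aB BA).
Qed.

Lemma vlpp_unitv a i : vlpp mle (pscale 'X_[a] (unitv k n i)) = Some (a, i).
Proof.
apply: (omax_uniq MT) => [|[b j]]; rewrite mem_vsupp /unitv !ffunE.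
  by rewrite eqxx mulr1 msuppX mem_seq1.
have [<-|_] := eqVneq i j; last by rewrite mulr0 msupp0.
by rewrite mulr1 msuppX mem_seq1 => /eqP ->; apply: (tord_refl MT (a, i)).
Qed.

End ModuleOrder.

Section Reduction.
Variables (k : fieldType) (n m : nat).
Variables (le : rel 'X_{1..n}) (mle : rel ('X_{1..n} * 'I_m)).
Hypotheses (Hle : is_term_order le) (Hmle : is_module_term_order mle).
Variable G : seq (lpoly k n m).
Hypothesis G_spoly : forall x y tg th, x \in G -> y \in G ->
  critical_pair le mle tg x th y -> std_rep le mle G (spoly le tg th x y).
Local Notation poly := {mpoly k[n]}.
Local Notation lp := (lpoly k n m).
Local Open Scope ring_scope.
Let HL := term_order_shift Hle.
Let LT := HL.1.
Let MT := module_term_order_total Hmle.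

(* A term (c, t, g^[v]) stands for c x^t g, with label lpp(x^t v). *)
Local Notation term := (k * 'X_{1..n} * lp)%type.

Definition term_poly (e : term) : poly := e.1.1 *: ('X_[e.1.2] * e.2.1).
Definition term_label (e : term) := vlpp mle (pscale 'X_[e.1.2] e.2.2).
Definition top_at t (e : term) := lpp le (term_poly e) == Some t.
Definition terms_lpp_le (r : seq term) t :=
  {in r, forall e, ole le (lpp le (term_poly e)) (Some t)}.

Definition is_rep (x : lp) (r : seq term) :=
  [/\ {in r, forall e, e.2 \in G}, x.1 = \sum_(e <- r) term_poly e &
      {in r, forall e, ole mle (term_label e) (vlpp mle x.2)}].

Definition lgb_witness (x : lp) :=
  exists2 y, y \in G &
    exists tf tg, [/\ lpp le x.1 = Some tf, lpp le y.1 = Some tg, (tg <= tf)%MM &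
      ole mle (vlpp mle (pscale 'X_[(tf - tg)%MM] y.2)) (vlpp mle x.2)].

Lemma term_lpp_Some e t : lpp le (term_poly e) = Some t ->
  exists a, [/\ lpp le e.2.1 = Some a, e.1.1 != 0 & t = (e.1.2 + a)%MM].
Proof.
rewrite /term_poly; have [->|nz] := eqVneq e.1.1 0; first by rewrite scale0r /lpp msupp0.
rewrite (lppZ HL) // (lppXM HL).
by case: (lpp le e.2.1) => //= a [<-]; exists a.
Qed.

Lemma std_rep_terms (y : lp) (c : k) (s : 'X_{1..n}) : std_rep le mle G y ->
  exists news : seq term,
  [/\ {in news, forall e, e.2 \in G},
      \sum_(e <- news) term_poly e = c *: ('X_[s] * y.1),
      {in news, forall e, ole le (lpp le (term_poly e)) (lpp le ('X_[s] * y.1))} &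
      {in news, forall e, ole mle (term_label e) (vlpp mle (pscale 'X_[s] y.2))}].
Proof.
case=> rr [rrG rrS rrB].
exists (flatten [seq [seq ((c * pr.1@_a, (s + a)%MM), pr.2) | a <- msupp pr.1] | pr <- rr]).
split.
- by move=> e /flatten_mapP [pr prr /mapP [a _ ->]]; apply: rrG.
- rewrite big_flatten big_map rrS mulr_sumr scaler_sumr; apply: eq_bigr => pr _.
  have -> : pr.1 * pr.2.1 = \sum_(a <- msupp pr.1) (pr.1@_a *: 'X_[a]) * pr.2.1.
    by rewrite -mulr_suml -mpolyE.
  rewrite big_map mulr_sumr scaler_sumr; apply: eq_bigr => a _.
  by rewrite /term_poly /= mpolyXD -!mul_mpolyC mpolyCM; ring.
- move=> e /flatten_mapP [pr prr /mapP [a ap ->]]; have [Hb _] := rrB pr prr.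
  rewrite /term_poly /=; apply: (ole_trans LT (lppZ_le HL _ _)).
  rewrite mpolyXD -mulrA !(lppXM HL s) (ole_shift HL).
  by move: (lpp_mulX_le HL pr.2.1 ap) Hb; apply: ole_trans.
- move=> e /flatten_mapP [pr prr /mapP [a ap ->]]; have [_ Hb] := rrB pr prr.
  rewrite /term_label /= pscaleXD !(vlppXM Hmle s) (ole_shiftm Hmle).
  by move: (vlpp_mulX_le Hmle pr.2.2 ap) Hb; apply: ole_trans.
Qed.

Lemma spoly_reduce (g h : lp) a b s (c1 c2 : k) :
  g \in G -> h \in G -> lpp le g.1 = Some a -> lpp le h.1 = Some b ->
  ole mle (vlpp mle (pscale 'X_[(mlcm a b - b)%MM] h.2))
          (vlpp mle (pscale 'X_[(mlcm a b - a)%MM] g.2)) ->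
  exists news : seq term,
  [/\ {in news, forall e, e.2 \in G},
      c1 *: ('X_[(s + (mlcm a b - a))%MM] * g.1) + c2 *: ('X_[(s + (mlcm a b - b))%MM] * h.1)
        = \sum_(e <- news) term_poly e
          + (c2 + c1 * (lc le g.1 / lc le h.1)) *: ('X_[(s + (mlcm a b - b))%MM] * h.1),
      {in news, forall e, olt le (lpp le (term_poly e)) (Some (s + mlcm a b)%MM)} &
      {in news, forall e, ole mle (term_label e)
                                 (vlpp mle (pscale 'X_[(s + (mlcm a b - a))%MM] g.2))}].
Proof.
move=> gG hG Ea Eb Hor; set L := mlcm a b.
have cp : critical_pair le mle (L - a)%MM g (L - b)%MM h by exists a, b.
have [news [newsG newsS newsL newsV]] := std_rep_terms c1 s (G_spoly gG hG cp).
exists news; split => //.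
- rewrite newsS /spoly /lsub /lmul /lscale /= !mpolyXD -!mul_mpolyC mpolyCD mpolyCM.
  ring.
- move=> e en; apply: (ole_olt_trans LT (newsL e en)).
  rewrite (lppXM HL) -[Some (s + L)%MM]/(omap (fun a => s + a)%MM (Some L)) (olt_shift HL).
  by have := lpp_spoly_lt HL Ea Eb.
- move=> e en; apply: (ole_trans MT (newsV e en)).
  rewrite pscaleXD !(vlppXM Hmle s) (ole_shiftm Hmle).
  have -> : (spoly le (L - a) (L - b) g h).2 =
      [ffun i => pscale 'X_[(L - a)%MM] g.2 i
                 - (lc le g.1 / lc le h.1) *: pscale 'X_[(L - b)%MM] h.2 i].
    by apply/ffunP => i; rewrite !ffunE.
  exact: vlpp_subZ_le Hmle _ _ _ Hor.
Qed.

Lemma top_pair_reduce e1 e2 t : e1.2 \in G -> e2.2 \in G ->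
  lpp le (term_poly e1) = Some t -> lpp le (term_poly e2) = Some t ->
  exists (news : seq term) (e' : term),
  [/\ term_poly e1 + term_poly e2 = \sum_(e <- e' :: news) term_poly e,
      {in e' :: news, forall e, e.2 \in G /\
         (ole mle (term_label e) (term_label e1) || ole mle (term_label e) (term_label e2))},
      ole le (lpp le (term_poly e')) (Some t) &
      {in news, forall e, olt le (lpp le (term_poly e)) (Some t)}].
Proof.
wlog Hor : e1 e2 / ole mle (term_label e2) (term_label e1).
  move=> Hw G1 G2 E1 E2.
  case/orP: (ole_total MT (term_label e2) (term_label e1)) => H; first exact: Hw.
  have [news [e' [S12 newsG e'B newsB]]] := Hw e2 e1 H G2 G1 E2 E1.
  exists news, e'; split => //; first by rewrite addrC.
  by move=> e /newsG [eG eB]; rewrite orbC.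
move=> G1 G2 E1 E2.
have [a [Ea nz1 Ht1]] := term_lpp_Some E1; have [b [Eb nz2 Ht2]] := term_lpp_Some E2.
move: e1 e2 Hor G1 G2 E1 E2 Ht1 Ht2 Ea Eb nz1 nz2 => [[c1 t1] g] [[c2 t2] h] /=.
move=> Hor G1 G2 E1 E2 Ht1 Ht2 Ea Eb nz1 nz2.
set L := mlcm a b; set s := (t - L)%MM.
(* t is a common multiple of a and b, hence t = s + L *)
have Lw i : L i = maxn (a i) (b i) by rewrite mnmE.
have tw i : t i = (t1 i + a i)%N /\ t i = (t2 i + b i)%N.
  by split; [rewrite Ht1 | rewrite Ht2]; rewrite mnmDE.
have Et1 : t1 = (s + (L - a))%MM.
  by apply/mnmP => i; rewrite !mnmDE !mnmBE Lw; have [] := tw i; lia.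
have Et2 : t2 = (s + (L - b))%MM.
  by apply/mnmP => i; rewrite !mnmDE !mnmBE Lw; have [] := tw i; lia.
have Et : t = (s + L)%MM.
  by apply/mnmP => i; rewrite !mnmDE !mnmBE Lw; have [] := tw i; lia.
have HorL : ole mle (vlpp mle (pscale 'X_[(L - b)%MM] h.2))
                    (vlpp mle (pscale 'X_[(L - a)%MM] g.2)).
  by rewrite -(ole_shiftm Hmle s) -!(vlppXM Hmle) -!pscaleXD -Et1 -Et2.
have [news [newsG newsS newsL newsV]] := spoly_reduce s c1 c2 G1 G2 Ea Eb HorL.
exists news, (c2 + c1 * (lc le g.1 / lc le h.1), t2, h); split.
- by rewrite big_cons /term_poly /= Et1 Et2 newsS addrC.
- move=> e; rewrite inE => /orP[/eqP -> | en]; first by rewrite (ole_refl MT) orbT.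
  by split; [apply: newsG | rewrite /term_label /= Et1 newsV].
- by rewrite -E2 /term_poly /= (lppZ HL _ nz2); apply: lppZ_le.
- by rewrite Et.
Qed.

Lemma rep_reduce_top x r t : is_rep x r ->
  terms_lpp_le r t -> (1 < count (top_at t) r)%N ->
  exists r', [/\ is_rep x r', terms_lpp_le r' t &
                 (count (top_at t) r' < count (top_at t) r)%N].
Proof.
move=> [rG rS rL] rB /count_gt1_perm [e1 [e2 [rest [/eqP E1 /eqP E2 Pr]]]].
have inr e : e \in [:: e1, e2 & rest] -> e \in r by rewrite (perm_mem Pr).
have e1r : e1 \in r by apply: inr; rewrite inE eqxx.
have e2r : e2 \in r by apply: inr; rewrite !inE eqxx orbT.
have [news [e' [S12 newsGL e'B newsB]]] := top_pair_reduce (rG _ e1r) (rG _ e2r) E1 E2.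
have news0 : count (top_at t) news = 0%N.
  by apply/eqP; rewrite -leqn0 leqNgt -has_count; apply/hasPn => e /newsB /andP[].
exists ((e' :: news) ++ rest); split.
- split.
  + move=> e; rewrite mem_cat => /orP[/newsGL[] // | er].
    by apply: rG; apply: inr; rewrite !inE er !orbT.
  + by rewrite rS (perm_big _ Pr) big_cat -S12 !big_cons /= addrA.
  + move=> e; rewrite mem_cat => /orP[/newsGL[_] | er].
      by case/orP => h; apply: (ole_trans MT h); apply: rL; apply: inr; rewrite !inE eqxx ?orbT.
    by apply: rL; apply: inr; rewrite !inE er !orbT.
- move=> e; rewrite mem_cat inE -orbA => /or3P[/eqP -> // | /newsB /olt_ole // | er].
  by apply: rB; apply: inr; rewrite !inE er !orbT.
- rewrite count_cat (permP Pr) /= news0 /top_at E1 E2 eqxx.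
  by case: (_ == _).
Qed.

Lemma rep_single_top x r t : is_rep x r ->
  terms_lpp_le r t -> count (top_at t) r = 1%N ->
  lgb_witness x.
Proof.
move=> [rG rS rL] rB c1.
have /hasP [e1 e1r /eqP E1] : has (top_at t) r by rewrite has_count c1.
have Pr := perm_to_rem e1r.
have rest0 : count (top_at t) (rem e1 r) = 0%N.
  by move: c1; rewrite (permP Pr) /= /top_at E1 eqxx => -[].
have restB : {in rem e1 r, forall e, olt le (lpp le (term_poly e)) (Some t)}.
  move=> e er; rewrite /olt (rB e (mem_rem er)) /=.
  by move/eqP: rest0; rewrite -leqn0 leqNgt -has_count => /hasPn /(_ e er).
have Ex : lpp le x.1 = Some t.
  rewrite rS (perm_big _ Pr) big_cons (lpp_add_lt HL) E1 //.
  by have := lpp_sum_lt HL restB.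
have [a [Ea nz1 Ht]] := term_lpp_Some E1.
exists e1.2; first exact: rG.
exists t, a; split => //; first by rewrite Ht lem_addl.
by rewrite Ht addmK; apply: rL.
Qed.

Lemma rep_lpp_bound x r : x.1 != 0 -> is_rep x r ->
  exists t, (exists2 e, e \in r & lpp le (term_poly e) = Some t) /\
            terms_lpp_le r t.
Proof.
move=> nz [_ rS _].
case: (option_max_spec LT (fun e => lpp le (term_poly e)) r) => [r0|]; last by [].
case/eqP: nz; rewrite rS big1_seq // => e /andP[_ er].
by apply/eqP; rewrite -(lpp_eq0 HL) r0.
Qed.

Lemma rep_lgb_witness_at x r t : x.1 != 0 -> is_rep x r ->
  terms_lpp_le r t -> lgb_witness x.
Proof.
move=> nz; elim/(well_founded_ind (term_order_wf Hle)): t r => t IHt r.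
move Hc: (count (top_at t) r) => N; elim/ltn_ind: N r Hc => N IHN r Hc Hr rB.
(* none, exactly one, or at least two terms reach t *)
case: N IHN Hc => [|[|N]] IHN Hc.
- have [t' [[e0 e0r E0] rB']] := rep_lpp_bound nz Hr.
  apply: (IHt t' _ r Hr rB'); rewrite /olt -E0 rB //=.
  have /hasPn /(_ e0 e0r) : ~~ has (top_at t) r by rewrite has_count Hc.
  by rewrite /top_at E0.
- exact: rep_single_top Hr rB Hc.
- have c2 : (1 < count (top_at t) r)%N by rewrite Hc.
  have [r' [Hr' rB' lt_r']] := rep_reduce_top Hr rB c2.
  by apply: (IHN _ _ r' erefl Hr' rB'); rewrite -Hc.
Qed.

Lemma rep_lgb_witness x r : x.1 != 0 -> is_rep x r -> lgb_witness x.
Proof.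
move=> nz Hr; have [t [_ rB]] := rep_lpp_bound nz Hr.
exact: rep_lgb_witness_at nz Hr rB.
Qed.

Lemma label_rep (F : 'I_m -> poly) x :
  (forall i, (F i, unitv k n i) \in G) -> in_ideal F x ->
  is_rep x (flatten [seq [seq ((x.2 i)@_a, a, (F i, unitv k n i)) | a <- msupp (x.2 i)]
                    | i <- enum 'I_m]).
Proof.
move=> HF Hx; split.
- by move=> e /flatten_mapP [i _ /mapP [a _ ->]]; apply: HF.
- rewrite Hx /dotv big_flatten big_map big_enum /=; apply: eq_big => // i _.
  have -> : x.2 i * F i = \sum_(a <- msupp (x.2 i)) ((x.2 i)@_a *: 'X_[a]) * F i.
    by rewrite -mulr_suml -mpolyE.
  by rewrite [RHS]big_map; apply: eq_bigr => a _; rewrite /term_poly /= -scalerAl.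
- move=> e /flatten_mapP [i _ /mapP [a ai ->]].
  by rewrite /term_label /= (vlpp_unitv k Hmle); apply: (omax_ub MT); rewrite mem_vsupp.
Qed.

End Reduction.

Local Open Scope ring_scope.

Theorem lemma5p2 (k : fieldType) (n m : nat)
    (le : rel 'X_{1..n}) (mle : rel ('X_{1..n} * 'I_m))
    (Hle : is_term_order le) (Hmle : is_module_term_order mle)
    (F : 'I_m -> {mpoly k[n]}) (G : seq (lpoly k n m)) :
  (forall x, x \in G -> in_ideal F x) ->
  (forall i : 'I_m, (F i, unitv k n i) \in G) ->
  (forall x y tg th, x \in G -> y \in G -> critical_pair le mle tg x th y ->
     std_rep le mle G (spoly le tg th x y)) ->
  labeled_GB le mle F G.
Proof.
move=> _ HF Hcp x Hx nz.
case: (rep_lgb_witness Hle Hmle Hcp nz (label_rep Hmle HF Hx)) => y yG [tf [tg H]].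
by exists y => //; exists tf, tg.
Qed.
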